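(* Let $R$ be a principal ideal domain and let $a\in R$ be a nonzero non-unit. Then the left ideal $Ra$ is completely prime if and only if $a$ is c-irreducible.
   Context: A principal ideal domain (PID) is a (not necessarily commutative) domain in which every left ideal and every right ideal is principal. A left ideal $\mathfrak{p}$ is completely prime if $\mathfrak{p}\neq R$ and, for $a,b\in R$, $ab\in\mathfrak{p}$ and $\mathfrak{p}b\subseteq\mathfrak{p}$ imply $a\in\mathfrak{p}$ or $b\in\mathfrak{p}$. Elements $b,c$ are similar if $R/Rb\cong R/Rc$ as left $R$-modules. A nonzero $a$ is c-reducible if $a=bb'=c'c$ for some non-units $b,b',c',c\in R$ with $b$ similar to $c$; an element that is not c-reducible is c-irreducible. *)

From HB Require Import structures.
From mathcomp Require Import all_boot all_algebra.
Set Implicit Arguments. Unset Strict Implicit. Unset Printing Implicit Defensive.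
Import GRing.Theory.
Local Open Scope ring_scope.

Section Defs.
Variable R : nzRingType.

Definition is_unit (x : R) : Prop := exists y : R, x * y = 1 /\ y * x = 1.

(* domain: no zero divisors (nontriviality 1 <> 0 is part of nzRingType) *)
Definition is_domain : Prop := forall x y : R, x * y = 0 -> x = 0 \/ y = 0.

Definition is_left_ideal (I : R -> Prop) : Prop :=
  [/\ I 0, (forall x y, I x -> I y -> I (x + y)) & (forall r x, I x -> I (r * x))].
Definition is_right_ideal (I : R -> Prop) : Prop :=
  [/\ I 0, (forall x y, I x -> I y -> I (x + y)) & (forall r x, I x -> I (x * r))].

Definition lprinc (a : R) : R -> Prop := fun x => exists r, x = r * a.
Definition rprinc (a : R) : R -> Prop := fun x => exists r, x = a * r.

Definition is_PID : Prop :=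
  [/\ is_domain,
      (forall I, is_left_ideal I -> exists a, forall x, I x <-> lprinc a x) &
      (forall I, is_right_ideal I -> exists a, forall x, I x <-> rprinc a x)].

Definition completely_prime (p : R -> Prop) : Prop :=
  (exists x, ~ p x) /\
  forall a b : R, p (a * b) -> (forall x, p x -> p (x * b)) -> p a \/ p b.

(* b and c are similar: R/Rb ~= R/Rc as left R-modules.  An isomorphism of
   the quotient modules is given by a lift f : R -> R which is well defined,
   additive and R-linear modulo Rc, injective and surjective on classes. *)
Definition similar (b c : R) : Prop :=
  exists f : R -> R,
    [/\ (forall x y, lprinc b (x - y) -> lprinc c (f x - f y)),
        (forall x y, lprinc c (f (x + y) - (f x + f y))),
        (forall r x, lprinc c (f (r * x) - r * f x)),
        (forall x, lprinc c (f x) -> lprinc b x) &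
        (forall y, exists x, lprinc c (f x - y))].

Definition c_reducible (a : R) : Prop :=
  a <> 0 /\
  exists b b' c' c : R,
    [/\ ~ is_unit b, ~ is_unit b', ~ is_unit c' & ~ is_unit c] /\
    [/\ a = b * b', a = c' * c & similar b c].

Definition c_irreducible (a : R) : Prop := ~ c_reducible a.

End Defs.

From Pilot Require Import Defs.
From mathcomp Require Import all_boot all_algebra.
From Stdlib Require Import Classical.
Set Implicit Arguments. Unset Strict Implicit. Unset Printing Implicit Defensive.
Import GRing.Theory.
Local Open Scope ring_scope.

(* Suppose [a = b b' = c' c] with [R/Rb ~ R/Rc], and let [x0] lift the class
   mapped to [1 + Rc].  Then [Rc x0 ⊆ Rb], so [c x0 b' ∈ Ra] and
   [Ra x0 b' ⊆ Ra]; complete primality gives [c ∈ Ra], making [c'] a unit, or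
   [x0 ∈ Rb], making [c] a unit.
   Conversely, let [pq ∈ Ra] with [Ra q ⊆ Ra] and [p, q ∉ Ra].  Writing
   [Rq + Ra = Rb'] and [{x | xq ∈ Ra} = Rc] gives [a = b b' = c' c], and with
   [b' = uq + va] the map [x ↦ xu] induces [R/Rb ~ R/Rc].  Each factor is a
   non-unit because [p, q ∉ Ra]; for [b'] this uses that a surjective
   endomorphism of the noetherian module [R/Ra] is injective. *)

Definition left_principal (R : nzRingType) : Prop :=
  forall I : R -> Prop, is_left_ideal I -> exists g, forall x, I x <-> lprinc g x.

Section LeftDivisibility.
Variable R : nzRingType.
Implicit Types a b c q r x y : R.

Lemma lprinc0 a : lprinc a 0.
Proof. by exists 0; rewrite mul0r. Qed.

Lemma lprincxx a : lprinc a a.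
Proof. by exists 1; rewrite mul1r. Qed.

Lemma lprincD a x y : lprinc a x -> lprinc a y -> lprinc a (x + y).
Proof. by move=> [r ->] [s ->]; exists (r + s); rewrite mulrDl. Qed.

Lemma lprincN a x : lprinc a x -> lprinc a (- x).
Proof. by move=> [r ->]; exists (- r); rewrite mulNr. Qed.

Lemma lprincB a x y : lprinc a x -> lprinc a y -> lprinc a (x - y).
Proof. by move=> hx /lprincN; apply: lprincD. Qed.

Lemma lprincMl a r x : lprinc a x -> lprinc a (r * x).
Proof. by move=> [s ->]; exists (r * s); rewrite mulrA. Qed.

Lemma lprincMr b c y : lprinc b y -> lprinc (b * c) (y * c).
Proof. by move=> [r ->]; exists r; rewrite mulrA. Qed.

Lemma lprinc_trans b x y : lprinc b x -> lprinc x y -> lprinc b y.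
Proof. by move=> [r ->] [s ->]; exists (s * r); rewrite mulrA. Qed.

Lemma lprinc_mulr_pow a q :
  (forall x, lprinc a x -> lprinc a (x * q)) ->
  forall n x, lprinc a x -> lprinc a (x * q ^+ n).
Proof.
move=> hq; elim=> [|n IH] x hx; first by rewrite expr0 mulr1.
by rewrite exprSr mulrA; apply: hq; apply: IH.
Qed.

End LeftDivisibility.

Section Domain.
Variable R : nzRingType.
Hypothesis hD : is_domain R.
Implicit Types b x y z : R.

Lemma mulIr_dom y x z : y <> 0 -> x * y = z * y -> x = z.
Proof.
move=> y0 e; have : (x - z) * y = 0 by rewrite mulrBl e subrr.
by case/hD => [/eqP|//]; rewrite subr_eq0 => /eqP.
Qed.

Lemma is_unit_lprinc1 x : is_unit x <-> lprinc x 1.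
Proof.
split=> [[y [_ yx]]|[r rx]]; first by exists y.
have x0 : x <> 0.
  by move=> x0; move/eqP: rx; rewrite x0 mulr0 oner_eq0.
exists r; split=> //; apply: (mulIr_dom x0).
by rewrite -mulrA -rx mulr1 mul1r.
Qed.

Lemma lprinc_mulIr b x y : y <> 0 -> lprinc (b * y) (x * y) -> lprinc b x.
Proof. by move=> y0 [r e]; exists r; apply: (mulIr_dom y0); rewrite e mulrA. Qed.

End Domain.

Lemma similar_lift1 (R : nzRingType) (b c : R) : Defs.similar b c ->
  exists x0, (forall y, lprinc c y -> lprinc b (y * x0)) /\
             (lprinc b x0 -> lprinc c 1).
Proof.
move=> [f [f_wd f_add f_lin f_inj f_surj]]; have [x0 hx0] := f_surj 1.
exists x0; split=> [y hy|hb].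
  apply: f_inj.
  have -> : f (y * x0) = (f (y * x0) - y * f x0) + y * (f x0 - 1) + y.
    by rewrite mulrBr mulr1 addrA subrK subrK.
  by apply: lprincD => //; apply: lprincD => //; apply: lprincMl.
have f0 : lprinc c (f 0).
  have -> : f 0 = - (f 0 - (f 0 + f 0)) by rewrite opprB addrK.
  by apply: lprincN; have := f_add 0 0; rewrite addr0.
have -> : 1 = (f x0 - f 0) + f 0 - (f x0 - 1).
  by rewrite subrK opprB addrC subrK.
by apply: lprincB => //; apply: lprincD => //; apply: f_wd; rewrite subr0.
Qed.

Lemma c_irreducible_of_completely_prime (R : nzRingType) (a : R) :
  is_domain R -> a <> 0 -> completely_prime (lprinc a) -> c_irreducible a.
Proof.
move=> hD ha0 [_ hcp] [_ [b [b' [c' [c [[_ _ nc' nc] [hab hac hbc]]]]]]].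
have [x0 [hx0 hx0b]] := similar_lift1 hbc.
have c0 : c <> 0 by move=> c0; apply: ha0; rewrite hac c0 mulr0.
have b'0 : b' <> 0 by move=> b'0; apply: ha0; rewrite hab b'0 mulr0.
have hax0 : lprinc b (a * x0) by apply: hx0; rewrite hac; apply/lprincMl/lprincxx.
case: (hcp c (x0 * b')).
- by rewrite mulrA hab; apply/lprincMr/hx0/lprincxx.
- move=> _ [r ->]; rewrite -!mulrA (mulrA a); apply: lprincMl.
  by rewrite {1}hab; apply: lprincMr.
- rewrite {1}hac -[X in lprinc _ X]mul1r => /(lprinc_mulIr hD c0) hc'.
  by apply: nc'; apply/(is_unit_lprinc1 hD).
- rewrite hab => /(lprinc_mulIr hD b'0)/hx0b hc.
  by apply: nc; apply/(is_unit_lprinc1 hD).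
Qed.

Section LeftPrincipal.
Variable R : nzRingType.
Hypothesis hL : left_principal R.
Variables a q : R.

Lemma lprinc_mulr_kernel : exists c, forall x, lprinc a (x * q) <-> lprinc c x.
Proof.
apply: hL; split=> [|x y hx hy|r x hx]; first by rewrite mul0r; apply: lprinc0.
  by rewrite mulrDl; apply: lprincD.
by rewrite -mulrA; apply: lprincMl.
Qed.

Lemma lprinc_sum_ideal : exists b', forall x, (exists y z, x = y * q + z * a) <-> lprinc b' x.
Proof.
apply: hL; split=> [|x y [y1 [z1 ->]] [y2 [z2 ->]]|r x [y [z ->]]].
- by exists 0, 0; rewrite !mul0r addr0.
- by exists (y1 + y2), (z1 + z2); rewrite !mulrDl addrACA.
- by exists (r * y), (r * z); rewrite mulrDr !mulrA.
Qed.

Hypothesis hq : forall x, lprinc a x -> lprinc a (x * q).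

(* The kernels of right multiplication by the powers of [q] on [R/Ra] form an
   ascending chain; their union is a left ideal, principal hence finitely
   generated, so the chain is stationary. *)
Lemma lprinc_mulr_pow_stable :
  exists N, forall n x, lprinc a (x * q ^+ n) -> lprinc a (x * q ^+ N).
Proof.
pose U x := exists n, lprinc a (x * q ^+ n).
have U_ideal : is_left_ideal U.
  split=> [|x y [n hx] [m hy]|r x [n hx]].
  - by exists 0%N; rewrite mul0r; apply: lprinc0.
  - exists (n + m)%N; rewrite mulrDl; apply: lprincD.
      by rewrite exprD mulrA; apply: lprinc_mulr_pow.
    by rewrite addnC exprD mulrA; apply: lprinc_mulr_pow.
  - by exists n; rewrite -mulrA; apply: lprincMl.
have [g hg] := hL U_ideal.
have [N hN] : U g by apply/hg/lprincxx.
exists N => n x hx; have [r ->] : lprinc g x by apply/hg; exists n.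
by rewrite -mulrA; apply: lprincMl.
Qed.

(* Right multiplication by [q] is a surjective endomorphism of [R/Ra] when
   [u q = 1] in [R/Ra]; it is then injective. *)
Lemma lprinc_cancel_mulr u p : lprinc a (u * q - 1) -> lprinc a (p * q) -> lprinc a p.
Proof.
move=> hu hpq; have [N hN] := lprinc_mulr_pow_stable.
have hun n : lprinc a (u ^+ n * q ^+ n - 1).
  elim: n => [|n IH]; first by rewrite !expr0 mulr1 subrr; apply: lprinc0.
  have -> : u ^+ n.+1 * q ^+ n.+1 - 1 =
            u ^+ n * (u * q - 1) * q ^+ n + (u ^+ n * q ^+ n - 1).
    by rewrite exprSr exprS mulrBr mulrBl mulr1 !mulrA addrA subrK.
  by apply: lprincD => //; apply/lprinc_mulr_pow/lprincMl.
have hpN : lprinc a (p * u ^+ N * q ^+ N).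
  apply: (hN N.+1).
  have -> : p * u ^+ N * q ^+ N.+1 = p * (u ^+ N * q ^+ N - 1) * q + p * q.
    by rewrite mulrBr mulr1 mulrBl subrK exprSr !mulrA.
  by apply: lprincD => //; apply/hq/lprincMl.
have -> : p = p * u ^+ N * q ^+ N - p * (u ^+ N * q ^+ N - 1).
  by rewrite mulrBr mulr1 opprB addrC -!mulrA subrK.
by apply: lprincB => //; apply: lprincMl.
Qed.

End LeftPrincipal.

Section Factorization.
Variable R : nzRingType.
Hypotheses (hD : is_domain R) (hL : left_principal R).
Variables a p q b b' c' c : R.
Hypotheses (ha0 : a <> 0) (hpq : lprinc a (p * q)).
Hypothesis hq : forall x, lprinc a x -> lprinc a (x * q).
Hypotheses (hp : ~ lprinc a p) (hnq : ~ lprinc a q).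
Hypothesis hc : forall x, lprinc a (x * q) <-> lprinc c x.
Hypothesis hb' : forall x, (exists y z, x = y * q + z * a) <-> lprinc b' x.
Hypotheses (hab : a = b * b') (hac : a = c' * c).

Lemma not_unit_c : ~ is_unit c.
Proof. by move=> /(is_unit_lprinc1 hD)/hc; rewrite mul1r. Qed.

Lemma not_unit_c' : ~ is_unit c'.
Proof.
move=> /(is_unit_lprinc1 hD)/(lprincMr c); rewrite mul1r -hac => hca.
by apply/hp/(lprinc_trans hca)/hc.
Qed.

Lemma not_unit_b : ~ is_unit b.
Proof.
move=> /(is_unit_lprinc1 hD)/(lprincMr b'); rewrite mul1r -hab => hab'.
by apply/hnq/(lprinc_trans hab')/hb'; exists 1, 0; rewrite mul1r mul0r addr0.
Qed.

Lemma not_unit_b' : ~ is_unit b'.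
Proof.
move=> /(is_unit_lprinc1 hD) [e he].
have [u [v eb']] : exists u v, b' = u * q + v * a by apply/hb'/lprincxx.
apply/hp/(lprinc_cancel_mulr hL hq (u := e * u)) => //.
exists (- (e * v)).
by rewrite he eb' mulrDr !mulrA opprD addNKr mulNr.
Qed.

Lemma similar_b_c : Defs.similar b c.
Proof.
have [u [v eb']] : exists u v, b' = u * q + v * a by apply/hb'/lprincxx.
have [tq eq] : lprinc b' q by apply/hb'; exists 1, 0; rewrite mul1r mul0r addr0.
have b'0 : b' <> 0 by move=> b'0; apply: ha0; rewrite hab b'0 mulr0.
have huq x : x * u * q = x * b' - x * v * a.
  by rewrite eb' mulrDr !mulrA addrK.
have hu x : lprinc c (x * u) <-> lprinc a (x * b').
  have hxva : lprinc a (x * v * a) by apply/lprincMl/lprincxx.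
  split=> [/hc|hx]; last by apply/hc; rewrite huq; apply: lprincB.
  by rewrite huq => hx; rewrite -(subrK (x * v * a) (x * b')); apply: lprincD.
exists (fun x => x * u); split=> [x y [r e]|x y|r x|x /hu|y].
- by rewrite -mulrBl; apply/hu; rewrite e hab; apply/lprincMr/lprincMl/lprincxx.
- by rewrite mulrDl subrr; apply: lprinc0.
- by rewrite mulrA subrr; apply: lprinc0.
- by rewrite {1}hab => /(lprinc_mulIr hD b'0).
- exists (y * tq); apply/hc.
  rewrite mulrBl huq -(mulrA y tq b') -eq addrAC subrr add0r.
  by apply/lprincN/lprincMl/lprincxx.
Qed.

End Factorization.

Lemma c_reducible_of_not_completely_prime (R : nzRingType) (a p q : R) :
  is_domain R -> left_principal R -> a <> 0 ->
  lprinc a (p * q) -> (forall x, lprinc a x -> lprinc a (x * q)) ->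
  ~ lprinc a p -> ~ lprinc a q -> c_reducible a.
Proof.
move=> hD hL ha0 hpq hq hp hnq.
have [c hc] := lprinc_mulr_kernel hL a q.
have [b' hb'] := lprinc_sum_ideal hL a q.
have [c' hac] : lprinc c a by apply/hc/hq/lprincxx.
have [b hab] : lprinc b' a by apply/hb'; exists 0, 1; rewrite mul0r add0r mul1r.
split=> //; exists b, b', c', c; split; split=> //.
- exact: (not_unit_b hD hnq hb' hab).
- exact: (not_unit_b' hD hL hpq hq hp hb').
- exact: (not_unit_c' hD hpq hp hc hac).
- exact: (not_unit_c hD hnq hc).
- exact: (similar_b_c hD ha0 hc hb' hab).
Qed.

Theorem proposition3p5 (R : nzRingType) (hPID : is_PID R) (a : R)
  (ha0 : a <> 0) (hau : ~ is_unit a) :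
  completely_prime (lprinc a) <-> c_irreducible a.
Proof.
have [hD hL _] := hPID.
split; first exact: c_irreducible_of_completely_prime.
move=> hirr; split=> [|p q hpq hq].
  by exists 1 => /(is_unit_lprinc1 hD).
apply: NNPP => hnpq; apply: hirr.
by apply: (c_reducible_of_not_completely_prime hD hL ha0 hpq hq) => h;
  apply: hnpq; [left | right].
Qed.
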